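(* Consider the resilient constrained consensus algorithm described in the context, with $\bigcap_{i\in\mathcal H}\mathcal X_i=\{x^*\}$. For all times $t$, $$\sum_{i\in\mathcal H}\psi_i(t)\le 4|\mathcal H|^3V(t),$$ where $$\psi_i(t)=\Big\|\sum_{j\in\mathcal M_i(t)}(x_{ji}(t)-x_i(t))\Big\|^2\quad\text{and}\quad V(t)=\sum_{i\in\mathcal H}\|x_i(t)-x^*\|^2.$$
   Context: Setting: There are $n$ agents $\mathcal N=\{1,\dots,n\}$ on a complete communication graph. A known integer $f\ge0$ is given. The agents are partitioned into normal agents $\mathcal H$ and Byzantine agents $\mathcal F$ with $|\mathcal F|\le f$. Each $i\in\mathcal H$ has a closed convex $\mathcal X_i\subseteq\mathbb R^m$. Algorithm: normal agent $i$ has state $x_i(t)\in\mathbb R^m$ and at time $t$ receives $x_{ji}(t)$ from each $j\ne i$. If $j\in\mathcal H$, then $x_{ji}(t)=x_j(t)$. If $j\in\mathcal F$, the value is arbitrary and may differ per recipient. Agent $i$ discards the $f$ received vectors with largest $\|x_i(t)-x_{ji}(t)\|$, with ties broken arbitrarily. The remaining $n-f-1$ senders form $\mathcal M_i(t)\subseteq\mathcal N\setminus\{i\}$. The update is $$x_i(t+1)=\mathrm P_{\mathcal X_i}\Big[x_i(t)+\alpha\sum_{j\in\mathcal M_i(t)}(x_{ji}(t)-x_i(t))\Big],$$ with $\alpha>0$ and $\mathrm P_{\mathcal C}$ the Euclidean projection. *)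

From HB Require Import structures.
From mathcomp Require Import all_boot all_order all_algebra.
From mathcomp Require Import all_classical all_reals all_analysis.
Set Implicit Arguments. Unset Strict Implicit. Unset Printing Implicit Defensive.
Import Order.TTheory GRing.Theory Num.Theory.
Import numFieldNormedType.Exports.
Local Open Scope ring_scope.
Local Open Scope classical_set_scope.

Definition enorm (R : realType) (m : nat) (v : 'rV[R]_m) : R :=
  Num.sqrt (\sum_(k < m) v 0 k ^+ 2).

Definition convex_rV (R : realType) (m : nat) (C : set 'rV[R]_m) : Prop :=
  forall x y, C x -> C y -> forall l : R, 0 <= l <= 1 ->
    C (l *: x + (1 - l) *: y).

Definition is_proj (R : realType) (m : nat) (C : set 'rV[R]_m)
  (y p : 'rV[R]_m) : Prop :=
  C p /\ forall z, C z -> enorm (y - p) <= enorm (y - z).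

(* M is a valid outcome of the trimming step of agent i: from the n-1
   received vectors (msg j, j <> i), the f with largest distance to xi
   are discarded (ties broken arbitrarily); M is the set of the
   remaining n-f-1 senders. *)
Definition trimmed (R : realType) (m n f : nat) (i : 'I_n)
  (xi : 'rV[R]_m) (msg : 'I_n -> 'rV[R]_m) (M : {set 'I_n}) : Prop :=
  [/\ i \notin M, #|M| = (n - f - 1)%N &
      forall j k, j \in M -> k \notin M -> k != i ->
        enorm (xi - msg j) <= enorm (xi - msg k)].

From HB Require Import structures.
From mathcomp Require Import all_boot all_order all_algebra.
From mathcomp Require Import all_classical all_reals all_analysis.
From mathcomp Require Import ring lra zify.
Set Implicit Arguments.
Unset Strict Implicit.
Unset Printing Implicit Defensive.
Import Order.TTheory GRing.Theory Num.Theory.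
Import numFieldNormedType.Exports.
Local Open Scope ring_scope.
Local Open Scope classical_set_scope.

(* A retained message comes either from a normal agent, or from a faulty one
   that was kept while some normal agent k was discarded; trimming by distance
   then bounds it by |x_i - x_k|.  So every retained difference is at most the
   spread of the normal states, whose square is at most 4 V by
   |a - b|^2 <= 2|a - x*|^2 + 2|b - x*|^2.  Cauchy-Schwarz over the at most
   |H| retained senders, then summation over the |H| normal agents, gives
   4 |H|^3 V.  Neither the constraint sets nor the projection step matter:
   the bound holds for any point x*. *)

Lemma sqr_sum_le_card (R : realDomainType) (I : finType) (A : {pred I})
    (a : I -> R) :
  (\sum_(j in A) a j) ^+ 2 <= #|A|%:R * \sum_(j in A) a j ^+ 2.
Proof.
have double_sum : \sum_(j in A) \sum_(l in A) (a j ^+ 2 + a l ^+ 2) =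
                  (#|A|%:R * \sum_(j in A) a j ^+ 2) *+ 2.
  under eq_bigr do rewrite big_split /= sumr_const.
  by rewrite big_split /= sumr_const sumrMnl mulr2n mulr_natl.
rewrite -(ler_pMn2r (n := 2)) // -double_sum expr2 mulr_suml -sumrMnl.
apply: ler_sum => j _; rewrite mulr_sumr -sumrMnl; apply: ler_sum => l _.
exact: leif_mean_square_scaled.
Qed.

Section EuclideanNorm.
Variables (R : realType) (m : nat).
Implicit Types a b c v : 'rV[R]_m.

Lemma enorm_ge0 v : 0 <= enorm v.
Proof. exact: sqrtr_ge0. Qed.

Lemma enorm_sqr v : enorm v ^+ 2 = \sum_(k < m) v 0 k ^+ 2.
Proof. by rewrite sqr_sqrtr // sumr_ge0 // => k _; apply: sqr_ge0. Qed.

Lemma enorm_distC a b : enorm (a - b) = enorm (b - a).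
Proof. by congr Num.sqrt; apply: eq_bigr => k _; rewrite !mxE -opprB sqrrN. Qed.

Lemma ler_enorm_sqr a b : enorm a <= enorm b -> enorm a ^+ 2 <= enorm b ^+ 2.
Proof. by rewrite ler_sqr // nnegrE enorm_ge0. Qed.

Lemma enorm_sqr_sum_le (I : finType) (A : {pred I}) (v : I -> 'rV[R]_m) :
  enorm (\sum_(j in A) v j) ^+ 2 <= #|A|%:R * \sum_(j in A) enorm (v j) ^+ 2.
Proof.
rewrite enorm_sqr; under [X in _ <= _ * X]eq_bigr do rewrite enorm_sqr.
rewrite exchange_big /= mulr_sumr; apply: ler_sum => k _.
rewrite summxE; exact: sqr_sum_le_card.
Qed.

Lemma enorm_sqr_subr_le a b c :
  enorm (a - b) ^+ 2 <= 2 * enorm (a - c) ^+ 2 + 2 * enorm (b - c) ^+ 2.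
Proof.
rewrite !enorm_sqr !mulr_sumr -big_split /=; apply: ler_sum => k _.
rewrite !mxE -subr_ge0.
have -> : 2 * (a 0 k - c 0 k) ^+ 2 + 2 * (b 0 k - c 0 k) ^+ 2 - (a 0 k - b 0 k) ^+ 2
          = (a 0 k + b 0 k - 2 * c 0 k) ^+ 2 by ring.
exact: sqr_ge0.
Qed.

End EuclideanNorm.

(* Exactly f senders are discarded; were they all faulty, then together with
   the retained faulty j there would be f + 1 faulty agents. *)
Lemma exists_discarded_normal (n f : nat) (H M : {set 'I_n}) (i j : 'I_n) :
  (#|~: H| <= f)%N -> i \notin M -> #|M| = (n - f - 1)%N ->
  j \in M -> j \notin H -> exists2 k, k \in H & k \notin i |: M.
Proof.
move=> faulty_le_f iNM cardM jM jNH.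
case: (pickP [pred k | (k \in H) && (k \notin i |: M)]) => [k /andP[] | none].
  by exists k.
have M_gt0 : (0 < #|M|)%N by apply/card_gt0P; exists j.
have card_discarded : #|~: (i |: M)| = f.
  by move: (cardsC (i |: M)) M_gt0; rewrite cardsU1 iNM cardM card_ord; lia.
have : j |: ~: (i |: M) \subset ~: H.
  apply/fintype.subsetP => k; rewrite !inE => /orP[/eqP -> // | kND].
  by move: (none k); rewrite /= !inE (negbTE kND) andbT => ->.
move/subset_leq_card; rewrite cardsU1 card_discarded !inE jM orbT /= add1n.
by move=> /leq_trans/(_ faulty_le_f); rewrite ltnn.
Qed.

Section TrimmedSnapshot.
Variables (R : realType) (m n f : nat) (H : {set 'I_n}).
Variables (x : 'I_n -> 'rV[R]_m) (msg : 'I_n -> 'I_n -> 'rV[R]_m).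
Variables (M : 'I_n -> {set 'I_n}) (xstar : 'rV[R]_m).
Hypothesis faulty_le_f : (#|~: H| <= f)%N.
Hypothesis msg_normal : forall i j, i \in H -> j \in H -> j != i -> msg j i = x j.
Hypothesis M_trimmed : forall i, i \in H -> trimmed f i (x i) (msg^~ i) (M i).

Let V := \sum_(i in H) enorm (x i - xstar) ^+ 2.

Lemma card_trimmed_le i : i \in H -> (#|M i| <= #|H|)%N.
Proof.
by case/M_trimmed => _ -> _; move: (cardsC H) faulty_le_f; rewrite card_ord; lia.
Qed.

Lemma retained_dominated i j : i \in H -> j \in M i ->
  exists2 k, k \in H & enorm (x i - msg j i) <= enorm (x i - x k).
Proof.
move=> iH jM; have [iNM cardM trim] := M_trimmed iH.
have [jH | jNH] := boolP (j \in H).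
  have ji : j != i by apply/eqP => eji; move: iNM; rewrite -{1}eji jM.
  by exists j; rewrite ?msg_normal.
have [k kH] := exists_discarded_normal faulty_le_f iNM cardM jM jNH.
rewrite !inE negb_or => /andP[ki kNM].
by exists k; rewrite -?(msg_normal iH kH ki) ?trim.
Qed.

Lemma normal_spread_le i k : i \in H -> k \in H -> enorm (x i - x k) ^+ 2 <= 4 * V.
Proof.
have term_le l : l \in H -> enorm (x l - xstar) ^+ 2 <= V.
  move=> lH; rewrite /V (bigD1 l) //= lerDl.
  by apply: sumr_ge0 => p _; apply: sqr_ge0.
move=> /term_le iV /term_le kV; apply: le_trans (enorm_sqr_subr_le _ _ xstar) _.
lra.
Qed.

Lemma retained_sqr_le i j : i \in H -> j \in M i ->
  enorm (msg j i - x i) ^+ 2 <= 4 * V.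
Proof.
move=> iH /(retained_dominated iH)[k kH /ler_enorm_sqr le_ik].
by rewrite enorm_distC; apply: le_trans le_ik (normal_spread_le iH kH).
Qed.

Lemma trimmed_disagreement_le i : i \in H ->
  enorm (\sum_(j in M i) (msg j i - x i)) ^+ 2 <= (#|H| ^ 2)%:R * (4 * V).
Proof.
move=> iH; apply: le_trans (enorm_sqr_sum_le _ _) _.
have V0 : 0 <= 4 * V by apply: le_trans (normal_spread_le iH iH); apply: sqr_ge0.
have cardM : #|M i|%:R <= #|H|%:R :> R by rewrite ler_nat card_trimmed_le.
have sum_le : \sum_(j in M i) enorm (msg j i - x i) ^+ 2 <= #|M i|%:R * (4 * V).
  by rewrite mulr_natl -sumr_const; apply: ler_sum => j; apply: retained_sqr_le.
apply: le_trans (ler_wpM2l (ler0n _ _) sum_le) _.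
rewrite natrX expr2 [leLHS]mulrA.
by apply: ler_wpM2r => //; apply: ler_pM.
Qed.

Lemma sum_trimmed_disagreement_le :
  \sum_(i in H) enorm (\sum_(j in M i) (msg j i - x i)) ^+ 2
    <= 4 * (#|H| ^ 3)%:R * V.
Proof.
apply: le_trans (ler_sum _ trimmed_disagreement_le) _.
by rewrite sumr_const -mulr_natr !natrX; lra.
Qed.

End TrimmedSnapshot.

(* H is the set of normal agents, x t i = x_i(t), M t i = M_i(t), and
   msg t j i = x_{ji}(t) is the vector sent by j to i. *)
Theorem lemma4 (R : realType) (n m f : nat) (H : {set 'I_n})
  (X : 'I_n -> set 'rV[R]_m) (alpha : R) (xstar : 'rV[R]_m)
  (x : nat -> 'I_n -> 'rV[R]_m) (msg : nat -> 'I_n -> 'I_n -> 'rV[R]_m)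
  (M : nat -> 'I_n -> {set 'I_n}) :
  (f < n)%N ->
  (#|~: H| <= f)%N ->
  (forall i, i \in H -> closed (X i) /\ convex_rV (X i)) ->
  0 < alpha ->
  [set y | forall i, i \in H -> X i y] = [set xstar] ->
  (forall t i j, i \in H -> j \in H -> j != i -> msg t j i = x t j) ->
  (forall t i, i \in H -> trimmed f i (x t i) (fun j => msg t j i) (M t i)) ->
  (forall t i, i \in H ->
     is_proj (X i) (x t i + alpha *: \sum_(j in M t i) (msg t j i - x t i))
       (x t.+1 i)) ->
  forall t,
    \sum_(i in H) enorm (\sum_(j in M t i) (msg t j i - x t i)) ^+ 2
    <= 4 * (#|H| ^ 3)%:R * \sum_(i in H) enorm (x t i - xstar) ^+ 2.
Proof.
move=> _ faulty_le_f _ _ _ msg_normal M_trimmed _ t.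
exact: sum_trimmed_disagreement_le (msg_normal t) (M_trimmed t).
Qed.
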